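(* Let $\mathfrak g=\mathfrak a\ltimes\mathfrak b$ be a countable-dimensional complex Lie algebra, where $\mathfrak a$ is a Lie subalgebra of $\mathfrak g$ and $\mathfrak b$ is an ideal of $\mathfrak g$ with $\mathfrak g=\mathfrak a\oplus\mathfrak b$ as vector spaces. Let $M$ be a simple $\mathfrak g$-module containing a simple $\mathfrak b$-submodule $H$ whose $\mathfrak b$-module structure extends to a $\mathfrak g$-module structure on $H$; denote this $\mathfrak g$-module by $H^{\mathfrak g}$. Then $M\cong H^{\mathfrak g}\otimes U^{\mathfrak g}$ as $\mathfrak g$-modules for some simple $\mathfrak a$-module $U$.
   Context: For an $\mathfrak a$-module $U$, $U^{\mathfrak g}$ denotes the $\mathfrak g$-module obtained from $U$ by letting $\mathfrak b$ act trivially (via $\mathfrak g/\mathfrak b\cong\mathfrak a$). The tensor product of $\mathfrak g$-modules carries the diagonal action $x(u\otimes w)=xu\otimes w+u\otimes xw$. *)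

From mathcomp Require Import all_boot all_algebra.
From mathcomp Require Import complex reals.
Set Implicit Arguments. Unset Strict Implicit. Unset Printing Implicit Defensive.
Import GRing.Theory.
Local Open Scope ring_scope.

Definition linear_map (K : fieldType) (V W : lmodType K) (f : V -> W) : Prop :=
  forall (c : K) (v w : V), f (c *: v + w) = c *: f v + f w.

Definition bilinear_map (K : fieldType) (V W X : lmodType K) (f : V -> W -> X) : Prop :=
  (forall w, linear_map (fun v => f v w)) /\ (forall v, linear_map (f v)).

Definition is_subspace (K : fieldType) (V : lmodType K) (S : V -> Prop) : Prop :=
  S 0 /\ (forall u v, S u -> S v -> S (u + v)) /\ (forall (c : K) v, S v -> S (c *: v)).

Definition is_lie_algebra (K : fieldType) (g : lmodType K) (br : g -> g -> g) : Prop :=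
  bilinear_map br /\ (forall x, br x x = 0) /\
  (forall x y z, br x (br y z) + br y (br z x) + br z (br x y) = 0).

Definition lie_subalgebra (K : fieldType) (g : lmodType K) (br : g -> g -> g)
    (a : g -> Prop) : Prop :=
  is_subspace a /\ forall x y, a x -> a y -> a (br x y).

Definition lie_ideal (K : fieldType) (g : lmodType K) (br : g -> g -> g)
    (b : g -> Prop) : Prop :=
  is_subspace b /\ forall x y, b y -> b (br x y).

Definition vs_direct_sum (K : fieldType) (g : lmodType K) (a b : g -> Prop) : Prop :=
  (forall x, a x -> b x -> x = 0) /\ (forall x, exists y z, a y /\ b z /\ x = y + z).

Definition countable_dim (K : fieldType) (g : lmodType K) : Prop :=
  exists e : nat -> g, forall x, exists (n : nat) (c : nat -> K),
    x = \sum_(i < n) c i *: e i.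

Definition is_lie_module_over (K : fieldType) (g : lmodType K) (br : g -> g -> g)
    (L : g -> Prop) (V : lmodType K) (act : g -> V -> V) : Prop :=
  (forall v, linear_map (fun x => act x v)) /\ (forall x, linear_map (act x)) /\
  (forall x y v, L x -> L y -> act (br x y) v = act x (act y v) - act y (act x v)).

Definition is_lie_module (K : fieldType) (g : lmodType K) (br : g -> g -> g)
    (V : lmodType K) (act : g -> V -> V) : Prop :=
  is_lie_module_over br (fun _ => True) act.

Definition simple_over (K : fieldType) (g : lmodType K) (L : g -> Prop)
    (V : lmodType K) (act : g -> V -> V) : Prop :=
  (exists v : V, v <> 0) /\
  forall S : V -> Prop, is_subspace S -> (forall x v, L x -> S v -> S (act x v)) ->
    (forall v, S v -> v = 0) \/ (forall v, S v).

Definition is_tensor_product (K : fieldType) (H U T : lmodType K)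
    (beta : H -> U -> T) : Prop :=
  bilinear_map beta /\
  forall (W : lmodType K) (phi : H -> U -> W), bilinear_map phi ->
    exists f : T -> W, (linear_map f /\ forall h u, f (beta h u) = phi h u) /\
      forall f' : T -> W, linear_map f' -> (forall h u, f' (beta h u) = phi h u) ->
        forall t, f' t = f t.

From HB Require Import structures.
From mathcomp Require Import all_boot all_algebra.
From mathcomp Require Import complex reals.
From mathcomp Require Import boolp classical_sets cardinality.
From mathcomp Require Import ereal measure lebesgue_measure.
From mathcomp Require finmap.
Set Implicit Arguments. Unset Strict Implicit. Unset Printing Implicit Defensive.
Import GRing.Theory.
Local Open Scope ring_scope.

(* U := Hom_b(H, M), with x.f := x o f - f o x, is a g-module on which b acts trivially,
   and evaluation H (x) U -> M is g-equivariant.  Dixmier's lemma (H has countable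
   dimension over the uncountable field C) gives End_b(H) = C, whence a Jacobson density
   statement: if f_1, ..., f_n in U are linearly independent, then sum_i f_i(h_i) = 0
   forces every h_i = 0.  So evaluation is injective on H (x) U; its image is a nonzero
   g-submodule of the simple module M, so it is onto.  Finally an a-submodule S of U is a
   g-submodule, so S(H) is 0 or M, and density turns this into S = 0 or S = U. *)

Section LinearMap.
Variables (K : fieldType) (V W : lmodType K) (f : V -> W).
Hypothesis f_lin : linear_map f.

Lemma linear_map0 : f 0 = 0.
Proof.
have := f_lin 1 0 0; rewrite !scale1r addr0 => f0.
by apply: (addrI (f 0)); rewrite addr0 -f0.
Qed.

Lemma linear_mapD u v : f (u + v) = f u + f v.
Proof. by have := f_lin 1 u v; rewrite !scale1r. Qed.

Lemma linear_mapZ c v : f (c *: v) = c *: f v.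
Proof. by rewrite -[c *: v]addr0 f_lin linear_map0 addr0. Qed.

Lemma linear_mapN v : f (- v) = - f v.
Proof. by rewrite -scaleN1r linear_mapZ scaleN1r. Qed.

Lemma linear_mapB u v : f (u - v) = f u - f v.
Proof. by rewrite linear_mapD linear_mapN. Qed.

Lemma linear_map_sum (I : Type) (r : seq I) (P : pred I) (F : I -> V) :
  f (\sum_(i <- r | P i) F i) = \sum_(i <- r | P i) f (F i).
Proof. exact: (big_morph f linear_mapD linear_map0). Qed.

End LinearMap.

Section NatIndexedSums.
Variable V : zmodType.

Lemma sumr_ord_recl n (F : nat -> V) :
  \sum_(i < n.+1) F i = F 0%N + \sum_(i < n) F i.+1.
Proof. by rewrite big_ord_recl; congr (_ + _); apply: eq_bigr => i _; rewrite lift0. Qed.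

Lemma sumr_ord_bump m j (F : nat -> V) : (j <= m)%N ->
  \sum_(i < m.+1) F i = F j + \sum_(i < m) F (bump j i).
Proof.
move=> le_jm; have lt_jm1 : (j < m.+1)%N by [].
by rewrite (bigD1_ord (Ordinal lt_jm1) (P := xpredT)).
Qed.

End NatIndexedSums.

Definition catf (T : Type) n (F G : nat -> T) i := if (i < n)%N then F i else G (i - n)%N.

Lemma sumr_catf (A B : Type) (V : zmodType) (op : A -> B -> V) m n
    (F1 F2 : nat -> A) (G1 G2 : nat -> B) :
  \sum_(i < m + n) op (catf m F1 F2 i) (catf m G1 G2 i) =
  \sum_(i < m) op (F1 i) (G1 i) + \sum_(i < n) op (F2 i) (G2 i).
Proof.
rewrite big_split_ord /=; congr (_ + _); apply: eq_bigr => i _; rewrite /catf /=.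
  by rewrite ltn_ord.
by rewrite ltnNge leq_addr /= addKn.
Qed.

Lemma catf_forall (T : Type) (P : T -> Prop) m n F G :
  (forall i, (i < m)%N -> P (F i)) -> (forall i, (i < n)%N -> P (G i)) ->
  forall i, (i < m + n)%N -> P (catf m F G i).
Proof.
move=> PF PG i lt_i; rewrite /catf; case: ifP => [|/negbT]; first exact: PF.
by rewrite -leqNgt => le_mi; apply: PG; rewrite ltn_subLR.
Qed.

Section LinearCombinations.
Variables (K : fieldType) (V : lmodType K).

Lemma subspace_lincomb (S : V -> Prop) n (c : nat -> K) (F : nat -> V) :
  is_subspace S -> (forall i, (i < n)%N -> S (F i)) -> S (\sum_(i < n) c i *: F i).
Proof.
move=> [S0 [SD SZ]]; elim: n => [|n IH] SF; first by rewrite big_ord0.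
rewrite big_ord_recr /=; apply: SD; last by apply/SZ/SF.
by apply: IH => i lt_in; apply/SF/ltnW.
Qed.

Lemma sumr_ord_widen n N (c : nat -> K) (F : nat -> V) : (n <= N)%N ->
  \sum_(i < n) c i *: F i = \sum_(i < N) (if (i < n)%N then c i else 0) *: F i.
Proof.
move=> le_nN; rewrite (big_ord_widen N (fun i => c i *: F i) le_nN) big_mkcond /=.
by apply: eq_bigr => i _; case: ifP => //; rewrite scale0r.
Qed.

Definition lin_indep n (v : nat -> V) := forall c : nat -> K,
  \sum_(i < n) c i *: v i = 0 -> forall i, (i < n)%N -> c i = 0.

Lemma lin_indep_behead n v : lin_indep n.+1 v -> lin_indep n (fun i => v i.+1).
Proof.
move=> v_indep c c_rel i lt_in.
apply: (v_indep (fun i => if i is j.+1 then c j else 0) _ i.+1 lt_in).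
by rewrite (sumr_ord_recl _ (fun i => (if i is j.+1 then c j else 0) *: v i)) scale0r add0r.
Qed.

Lemma lin_depP n v : ~ lin_indep n v ->
  exists2 c : nat -> K, \sum_(i < n) c i *: v i = 0 & exists2 j, (j < n)%N & c j <> 0.
Proof.
move=> v_dep; apply: contrapT => no_rel; apply: v_dep => c c_rel i lt_in.
by apply: contrapT => ci_neq0; apply: no_rel; exists c => //; exists i.
Qed.

Lemma lin_dep_cons n v : lin_indep n (fun i => v i.+1) -> ~ lin_indep n.+1 v ->
  exists d : nat -> K, v 0%N = \sum_(i < n) d i *: v i.+1.
Proof.
move=> tail_indep /lin_depP[c + [j lt_jn cj_neq0]].
rewrite (sumr_ord_recl _ (fun i => c i *: v i)) => c_rel.
have c0_neq0 : c 0%N <> 0.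
  move=> c00; move: c_rel; rewrite c00 scale0r add0r => c_rel.
  case: j lt_jn cj_neq0 => [|j] lt_jn; apply=> //.
  exact: (tail_indep (fun i => c i.+1) c_rel j lt_jn).
move/eqP: c_rel; rewrite addr_eq0 => /eqP /(congr1 (fun w => (c 0%N)^-1 *: w)).
rewrite scalerA mulVf ?scale1r => [->|]; last exact/eqP.
exists (fun i => - ((c 0%N)^-1 * c i.+1)).
rewrite scalerN scaler_sumr -sumrN.
by apply: eq_bigr => i _; rewrite scalerA scaleNr.
Qed.

Lemma lin_dep_shorten (H : lmodType K) n (fs : nat -> V) (hs : nat -> H) :
  ~ lin_indep n fs -> exists m j (hs' : nat -> H), [/\ n = m.+1, (j <= m)%N &
    forall (X : lmodType K) (Psi : H -> V -> X), bilinear_map Psi ->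
      \sum_(i < n) Psi (hs i) (fs i) = \sum_(i < m) Psi (hs' i) (fs (bump j i))].
Proof.
move=> /lin_depP[c]; case: n => [_ [] //|m c_rel [j lt_jm cj_neq0]].
have le_jm : (j <= m)%N := lt_jm.
exists m, j, (fun i => hs (bump j i) - (c (bump j i) / c j) *: hs j).
split => // X Psi [Psi_linl Psi_linr].
rewrite (@sumr_ord_bump _ m j (fun i => Psi (hs i) (fs i)) le_jm).
under [RHS]eq_bigr do rewrite (linear_mapB (Psi_linl _)) (linear_mapZ (Psi_linl _)).
rewrite sumrB addrC; congr (_ + _).
move: c_rel; rewrite (@sumr_ord_bump _ m j (fun i => c i *: fs i) le_jm) => /eqP.
rewrite addr_eq0 => /eqP /(congr1 (fun f => (c j)^-1 *: f)).
rewrite scalerA mulVf ?scale1r => [->|]; last exact/eqP.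
rewrite (linear_mapZ (Psi_linr _)) (linear_mapN (Psi_linr _)) (linear_map_sum (Psi_linr _)).
rewrite scalerN scaler_sumr; congr (- _); apply: eq_bigr => i _.
by rewrite (linear_mapZ (Psi_linr _)) scalerA mulrC.
Qed.

Definition spanned (e : nat -> V) (v : V) :=
  exists N (c : nat -> K), v = \sum_(i < N) c i *: e i.

Lemma spanned_subspace e : is_subspace (spanned e).
Proof.
split; [|split].
- by exists 0%N, (fun _ => 0); rewrite big_ord0.
- move=> _ _ [n1 [c1 ->]] [n2 [c2 ->]].
  exists (maxn n1 n2), (fun i => (if (i < n1)%N then c1 i else 0) +
                                (if (i < n2)%N then c2 i else 0)).
  rewrite (@sumr_ord_widen n1 (maxn n1 n2)) ?leq_maxl //.
  rewrite (@sumr_ord_widen n2 (maxn n1 n2)) ?leq_maxr //.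
  by rewrite -big_split /=; apply: eq_bigr => i _; rewrite scalerDl.
- move=> c _ [n [d ->]]; exists n, (fun i => c * d i).
  by rewrite scaler_sumr; apply: eq_bigr => i _; rewrite scalerA.
Qed.

Lemma spanned_gen e k : spanned e (e k).
Proof.
exists k.+1, (fun i => (i == k)%:R); rewrite big_ord_recr /= eqxx scale1r big1 ?add0r //.
by move=> i _; rewrite (ltn_eqF (ltn_ord i)) scale0r.
Qed.

(* A nonzero row of the kernel of the (N+1) x N coefficient matrix is a dependence relation. *)
Lemma spanned_lin_dep N (e w : nat -> V) :
  (forall j, (j <= N)%N -> exists c : nat -> K, w j = \sum_(i < N) c i *: e i) ->
  ~ lin_indep N.+1 w.
Proof.
move=> w_span w_indep.
have /choice[cf cf_w] : forall j, exists c : nat -> K,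
    (j <= N)%N -> w j = \sum_(i < N) c i *: e i.
  move=> j; case: (leqP j N) => [le_jN|_]; last by exists (fun _ => 0).
  by have [c c_w] := w_span j le_jN; exists c.
pose A : 'M[K]_(N.+1, N) := \matrix_(j, i) cf j i.
have /rowV0Pn[x x_ker x_neq0] : kermx A != 0.
  by rewrite -mxrank_eq0 mxrank_ker subn_eq0 -ltnNge ltnS rank_leq_col.
have xA0 : x *m A = 0 by apply/sub_kermxP.
have [k xk_neq0] : exists k, x 0 k != 0.
  apply: contrapT => xk0; move/eqP: x_neq0; apply; apply/rowP => k.
  by rewrite mxE; apply/eqP/negPn/negP => xk; apply: xk0; exists k.
move/eqP: xk_neq0; apply; rewrite -[k in x 0 k]inord_val.
apply: (w_indep (fun j => x 0 (inord j))) => //.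
under eq_bigr => j _ do rewrite inord_val (cf_w j (ltn_ord j)) scaler_sumr.
rewrite exchange_big /=; apply: big1 => i _.
under eq_bigr do rewrite scalerA.
rewrite -scaler_suml.
have -> : \sum_(j < N.+1) x 0 j * cf j i = (x *m A) 0 i.
  by rewrite mxE; apply: eq_bigr => j _; rewrite mxE.
by rewrite xA0 mxE scale0r.
Qed.

End LinearCombinations.

Definition equivariant (K : fieldType) (g : lmodType K) (L : g -> Prop)
    (V W : lmodType K) (actV : g -> V -> V) (actW : g -> W -> W) (f : V -> W) :=
  linear_map f /\ forall x v, L x -> f (actV x v) = actW x (f v).

Section PolyApply.
Variables (K : fieldType) (V : lmodType K) (phi : V -> V).
Hypothesis phi_lin : linear_map phi.

Lemma iter_linear i : linear_map (iter i phi).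
Proof. by elim: i => [|i IH] c u v //=; rewrite IH phi_lin. Qed.

Definition papply (p : {poly K}) (v : V) := \sum_(i < size p) p`_i *: iter i phi v.

Lemma papply_widen n (p : {poly K}) v : (size p <= n)%N ->
  papply p v = \sum_(i < n) p`_i *: iter i phi v.
Proof.
move=> le_pn; rewrite /papply (big_ord_widen n (fun i => p`_i *: iter i phi v) le_pn).
rewrite big_mkcond /=; apply: eq_bigr => i _; case: ifP => // /negbT.
by rewrite -leqNgt => le_pi; rewrite nth_default // scale0r.
Qed.

Lemma papply0 v : papply 0 v = 0.
Proof. by rewrite /papply size_poly0 big_ord0. Qed.

Lemma papplyD p q v : papply (p + q) v = papply p v + papply q v.
Proof.
set n := maxn (size p) (size q).
rewrite (@papply_widen n (p + q)); last exact: leq_trans (size_polyD _ _) _.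
rewrite (@papply_widen n p) ?leq_maxl // (@papply_widen n q) ?leq_maxr // -big_split.
by apply: eq_bigr => i _; rewrite coefD scalerDl.
Qed.

Lemma papplyZ c p v : papply (c *: p) v = c *: papply p v.
Proof.
rewrite (@papply_widen (size p) (c *: p)) ?size_scale_leq // /papply scaler_sumr.
by apply: eq_bigr => i _; rewrite coefZ scalerA.
Qed.

Lemma papplyC c v : papply c%:P v = c *: v.
Proof. by rewrite (@papply_widen 1 c%:P) ?size_polyC ?leq_b1 // big_ord1 coefC. Qed.

Lemma papplyXM q v : papply ('X * q) v = phi (papply q v).
Proof.
rewrite (@papply_widen (size q).+1 ('X * q)); last first.
  by apply: leq_trans (size_polyMleq _ _) _; rewrite size_polyX.
rewrite big_ord_recl coefXM scale0r add0r /papply (linear_map_sum phi_lin).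
by apply: eq_bigr => i _; rewrite coefXM (linear_mapZ phi_lin).
Qed.

Lemma papply1 v : papply 1 v = v.
Proof. by rewrite -polyC1 papplyC scale1r. Qed.

Lemma papplyX v : papply 'X v = phi v.
Proof. by rewrite -[X in papply X]mulr1 papplyXM papply1. Qed.

Lemma papply_linear p : linear_map (papply p).
Proof.
move=> c u w; rewrite /papply scaler_sumr -big_split; apply: eq_bigr => i _.
by rewrite iter_linear scalerDr !scalerA mulrC.
Qed.

Lemma papplyM p q v : papply (p * q) v = papply p (papply q v).
Proof.
elim/poly_ind: p q v => [|p c IH] q v; first by rewrite mul0r !papply0.
by rewrite mulrDl -mulrA mul_polyC papplyD papplyZ IH papplyXM papplyD IH papplyX papplyC.
Qed.

Lemma papply_sum (I : Type) (r : seq I) (P : pred I) (F : I -> {poly K}) v :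
  papply (\sum_(i <- r | P i) F i) v = \sum_(i <- r | P i) papply (F i) v.
Proof. exact: (big_morph (papply^~ v) (fun p q => papplyD p q v) (papply0 v)). Qed.

Lemma papplyXsubC z v : papply ('X - z%:P) v = phi v - z *: v.
Proof.
by rewrite papplyD -polyCN papplyC papplyX scaleNr.
Qed.

Lemma papply_prod_XsubC_inj (r : seq K) v :
  (forall (z : K) w, phi w - z *: w = 0 -> w = 0) ->
  papply (\prod_(z <- r) ('X - z%:P)) v = 0 -> v = 0.
Proof.
move=> phi_inj; elim: r v => [|z r IH] v.
  by rewrite big_nil papply1.
by rewrite big_cons papplyM papplyXsubC => /phi_inj /IH.
Qed.

End PolyApply.

(* sum_j a_j v_j = 0 gives p(phi) h0 = 0 for p = sum_j a_j prod_(k != j) (X - c_k); as p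
   splits into injective linear factors, p = 0, whereas p(c_j) = a_j prod_(k != j) (c_j - c_k). *)
Lemma resolvent_lin_indep (K : closedFieldType) (V : lmodType K) (phi : V -> V) N
    (c : nat -> K) (v : nat -> V) (h0 : V) :
  linear_map phi -> (forall (z : K) w, phi w - z *: w = 0 -> w = 0) -> h0 <> 0 ->
  (forall i j, (i <= N)%N -> (j <= N)%N -> c i = c j -> i = j) ->
  (forall j, (j <= N)%N -> phi (v j) - c j *: v j = h0) ->
  lin_indep N.+1 v.
Proof.
move=> phi_lin phi_inj h0_neq0 c_inj v_res a a_rel j0 le_j0N.
apply: contrapT => aj0_neq0.
pose P := \prod_(k < N.+1) ('X - (c k)%:P).
pose q (j : 'I_N.+1) := \prod_(k < N.+1 | k != j) ('X - (c k)%:P).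
pose p := \sum_(j < N.+1) a j *: q j.
have q_h0 (j : 'I_N.+1) : papply phi (q j) h0 = papply phi P (v j).
  rewrite -(v_res j (ltn_ord j)) -papplyXsubC // -papplyM //.
  by rewrite /P (bigD1 j) //= mulrC.
have p_h0 : papply phi p h0 = 0.
  have Pphi_lin := papply_linear phi_lin P.
  rewrite /p papply_sum; under eq_bigr do rewrite papplyZ q_h0 -(linear_mapZ Pphi_lin).
  by rewrite -(linear_map_sum Pphi_lin) a_rel (linear_map0 Pphi_lin).
pose J : 'I_N.+1 := Ordinal le_j0N.
have p_cj0 : p.[c j0] != 0.
  rewrite /p horner_sum (bigD1 J) //= big1 ?addr0 => [|j j_neqJ].
    rewrite hornerZ mulf_neq0 //; first exact/eqP.
    rewrite horner_prod; apply/prodf_neq0 => k k_neqJ.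
    rewrite hornerXsubC subr_eq0; apply: contra k_neqJ => /eqP cj0k.
    by apply/eqP/val_inj/esym/(c_inj _ _ le_j0N (ltn_ord k) cj0k).
  rewrite hornerZ horner_prod (bigD1 J) /=; last by rewrite eq_sym.
  by rewrite hornerXsubC subrr mul0r mulr0.
have p_neq0 : p != 0 by apply: contraNneq p_cj0 => ->; rewrite horner0.
have [r p_split] := closed_field_poly_normal p.
move: p_h0; rewrite p_split papplyZ => /eqP; rewrite scaler_eq0 lead_coef_eq0 (negbTE p_neq0).
by move=> /eqP /(papply_prod_XsubC_inj phi_lin phi_inj).
Qed.

(* H is spanned by the countably many vectors e_(i_1) ... e_(i_k) h0, indexed by words. *)
Lemma simple_countable_span (K : fieldType) (g : lmodType K) (b : g -> Prop)
    (H : lmodType K) (rho : g -> H -> H) :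
  (forall v, linear_map (fun x => rho x v)) -> (forall x, linear_map (rho x)) ->
  simple_over b rho -> countable_dim g -> exists e : nat -> H, forall h, spanned e h.
Proof.
move=> rho_linx rho_lin [[h0 h0_neq0] H_simple] [e_g e_g_span].
pose word_vec (w : seq nat) := foldr (fun i acc => rho (e_g i) acc) h0 w.
pose e n := if unpickle n is Some w then word_vec w else 0.
exists e.
have e_stable x h : spanned e h -> spanned e (rho x h).
  move=> [N [c ->]]; rewrite (linear_map_sum (rho_lin x)).
  under eq_bigr do rewrite (linear_mapZ (rho_lin x)).
  apply: (subspace_lincomb c (spanned_subspace e) (F := fun i => rho x (e i))) => i _.
  have [n [d ->]] := e_g_span x; rewrite (linear_map_sum (rho_linx _)).
  under eq_bigr do rewrite (linear_mapZ (rho_linx _)).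
  apply: (subspace_lincomb d (spanned_subspace e) (F := fun k => rho (e_g k) (e i))) => k _.
  rewrite /e; case: (unpickle i) => [w|]; last first.
    by rewrite (linear_map0 (rho_lin _)); exact: (spanned_subspace e).1.
  have -> : rho (e_g k) (word_vec w) = e (pickle (k :: w)) by rewrite /e pickleK.
  exact: spanned_gen.
have [e_span0|//] := H_simple _ (spanned_subspace e) (fun x v _ => e_stable x v).
case: h0_neq0; have := e_span0 _ (spanned_gen e (pickle ([::] : seq nat))).
by rewrite /e pickleK.
Qed.

Section SimpleEquivariant.
Variables (K : fieldType) (g : lmodType K) (b : g -> Prop).
Variables (H : lmodType K) (rho : g -> H -> H) (psi : H -> H).
Hypotheses (rho_lin : forall x, linear_map (rho x)) (H_simple : simple_over b rho).
Hypotheses (psi_equiv : equivariant b rho rho psi) (psi_neq0 : exists h, psi h <> 0).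

Lemma equivariant_simple_inj v : psi v = 0 -> v = 0.
Proof.
pose ker u := psi u = 0.
have ker_subspace : is_subspace ker.
  split; [|split]; rewrite /ker.
  - exact: (linear_map0 psi_equiv.1).
  - by move=> u w; rewrite (linear_mapD psi_equiv.1) => -> ->; rewrite addr0.
  - by move=> c w; rewrite (linear_mapZ psi_equiv.1) => ->; rewrite scaler0.
have ker_stable y u : b y -> ker u -> ker (rho y u).
  by rewrite /ker => b_y psi_u; rewrite psi_equiv.2 // psi_u (linear_map0 (rho_lin y)).
have [ker0|ker_all] := H_simple.2 ker ker_subspace ker_stable; first exact: ker0.
by have [h] := psi_neq0; case; apply: ker_all.
Qed.

Lemma equivariant_simple_surj u : exists v, psi v = u.
Proof.
pose img u := exists v, psi v = u.
have img_subspace : is_subspace img.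
  split; [|split].
  - by exists 0; exact: (linear_map0 psi_equiv.1).
  - by move=> _ _ [v1 <-] [v2 <-]; exists (v1 + v2); rewrite (linear_mapD psi_equiv.1).
  - by move=> c _ [v <-]; exists (c *: v); rewrite (linear_mapZ psi_equiv.1).
have img_stable y w : b y -> img w -> img (rho y w).
  by move=> b_y [v <-]; exists (rho y v); rewrite psi_equiv.2.
have [img0|img_all] := H_simple.2 img img_subspace img_stable; last exact: img_all.
by have [h] := psi_neq0; case; apply: img0; exists h.
Qed.

End SimpleEquivariant.

Section Uncountable.
Import Num.Theory.
Local Open Scope classical_set_scope.

Lemma uncountable_fiber_distinct (T : choiceType) (n : T -> nat) : ~ countable [set: T] ->
  exists N (s : nat -> T), (forall i j, (i <= N)%N -> (j <= N)%N -> s i = s j -> i = j) /\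
    (forall j, (j <= N)%N -> (n (s j) <= N)%N).
Proof.
move=> T_unc.
have [N fiber_inf] : exists N, infinite_set [set x | (n x <= N)%N].
  apply: contrapT => fibers_fin; apply: T_unc.
  have -> : [set: T] = \bigcup_(N in [set: nat]) [set x | (n x <= N)%N].
    by apply/seteqP; split=> [x _|x _ //]; exists (n x) => /=.
  apply: bigcup_countable => [|N _]; first exact: countableP.
  by apply: finite_set_countable; apply: contrapT => ?; apply: fibers_fin; exists N.
have [B B_fiber B_card] := infinite_set_fset N.+1 fiber_inf.
have [x0 _] := infinite_setN0 fiber_inf.
pose l := finmap.enum_fset B.
have lt_Nl : (N < size l)%N by [].
exists N, (fun j => nth x0 l j); split=> [i j le_iN le_jN /eqP|j le_jN].
  rewrite nth_uniq ?finmap.fset_uniq //; first exact/eqP.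
    exact: leq_ltn_trans le_iN lt_Nl.
  exact: leq_ltn_trans le_jN lt_Nl.
by apply: (B_fiber (nth x0 l j)); rewrite /= mem_nth // (leq_ltn_trans le_jN lt_Nl).
Qed.

Lemma real_not_countable (R : realType) : ~ countable [set: R].
Proof.
move=> R_count.
have := countable_lebesgue_measure0 (sub_countable (subset_card_le (subsetT `[0%R, 1%R])) R_count).
rewrite lebesgue_measure_itv /= lte_fin ltr01 /= oppr0 adde0 => /eqP.
by rewrite eqe oner_eq0.
Qed.

Lemma complex_not_countable (R : realType) : ~ countable [set: R[i]].
Proof.
move=> /countable_injP[f f_inj]; apply: (@real_not_countable R); apply/countable_injP.
by exists (fun x => f x%:C%C) => x y _ _ /f_inj; rewrite !in_setT => /(_ isT isT) [].
Qed.

End Uncountable.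

(* Dixmier: were phi not scalar, the resolvent vectors (phi - r)^-1 h0, r in K, would be
   linearly independent, impossible for uncountably many r in a space of countable dimension. *)
Lemma dixmier_schur (K : closedFieldType) (g : lmodType K) (b : g -> Prop)
    (H : lmodType K) (rho : g -> H -> H) :
  ~ countable [set: K] -> (forall x, linear_map (rho x)) -> simple_over b rho ->
  (exists e : nat -> H, forall h, spanned e h) ->
  forall phi : H -> H, equivariant b rho rho phi -> exists c : K, forall h, phi h = c *: h.
Proof.
move=> K_unc rho_lin H_simple [e e_span] phi [phi_lin phi_comm].
apply: contrapT => phi_nonscalar.
pose psi (r : K) h := phi h - r *: h.
have psi_equiv r : equivariant b rho rho (psi r).
  split=> [c u v|y h b_y]; rewrite /psi.
    rewrite phi_lin scalerBr scalerDr !scalerA opprD !addrA mulrC.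
    by congr (_ - _); rewrite addrAC.
  by rewrite phi_comm // (linear_mapB (rho_lin y)) (linear_mapZ (rho_lin y)).
have psi_neq0 r : exists h, psi r h <> 0.
  apply: contrapT => psi0; apply: phi_nonscalar; exists r => h.
  apply/eqP; rewrite -subr_eq0; apply/eqP.
  by apply: contrapT => psi_h; apply: psi0; exists h.
have [h0 h0_neq0] := H_simple.1.
have /choice[v v_res] r : exists v, psi r v = h0.
  exact: equivariant_simple_surj H_simple (psi_equiv r) (psi_neq0 r) h0.
have /choice[rep rep_v] r : exists p : nat * (nat -> K), v r = \sum_(i < p.1) p.2 i *: e i.
  by have [N [c v_r]] := e_span (v r); exists (N, c).
have [N [s [s_inj s_len]]] := uncountable_fiber_distinct (fun r => (rep r).1) K_unc.
apply: (@spanned_lin_dep _ _ N e (fun j => v (s j))).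
  move=> j le_jN; exists (fun i => if (i < (rep (s j)).1)%N then (rep (s j)).2 i else 0).
  by rewrite rep_v (sumr_ord_widen _ _ (s_len j le_jN)).
apply: (resolvent_lin_indep phi_lin _ h0_neq0 s_inj) => [z w|j _]; last exact: v_res.
exact: equivariant_simple_inj rho_lin H_simple (psi_equiv z) (psi_neq0 z) w.
Qed.

Section BHom.
Variables (K : fieldType) (g : lmodType K) (br : g -> g -> g) (b : g -> Prop).
Variables (M H : lmodType K) (actM : g -> M -> M) (rho : g -> H -> H).
Hypotheses (b_ideal : lie_ideal br b) (HM : is_lie_module br actM).
Hypothesis Hrho : is_lie_module br rho.

Record bhom := BHom { bhom_fun :> H -> M; bhom_equiv : equivariant b rho actM bhom_fun }.

Lemma bhom_ext (f f' : bhom) : (forall h, f h = f' h) -> f = f'.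
Proof.
case: f f' => [f f_equiv] [f' f'_equiv] /= /funext eq_ff'.
by subst f'; congr BHom; apply: Prop_irrelevance.
Qed.

HB.instance Definition _ := gen_eqMixin bhom.
HB.instance Definition _ := gen_choiceMixin bhom.

Lemma actM_lin x : linear_map (actM x). Proof. exact: HM.2.1. Qed.
Lemma rho_lin x : linear_map (rho x). Proof. exact: Hrho.2.1. Qed.
Lemma bhom_lin (f : bhom) : linear_map f. Proof. exact: (bhom_equiv f).1. Qed.
Lemma bhom_comm (f : bhom) y h : b y -> f (rho y h) = actM y (f h).
Proof. exact: (bhom_equiv f).2. Qed.

Fact bhom0_subproof : equivariant b rho actM (fun _ => 0).
Proof.
split=> [c u v|y h _]; first by rewrite scaler0 addr0.
by rewrite linear_map0 //; apply: actM_lin.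
Qed.

Fact bhom_add_subproof (f f' : bhom) : equivariant b rho actM (fun h => f h + f' h).
Proof.
split=> [c u v|y h b_y].
  by rewrite !(bhom_lin f) !(bhom_lin f') scalerDr addrACA.
by rewrite !bhom_comm // linear_mapD //; apply: actM_lin.
Qed.

Fact bhom_opp_subproof (f : bhom) : equivariant b rho actM (fun h => - f h).
Proof.
split=> [c u v|y h b_y]; first by rewrite (bhom_lin f) opprD scalerN.
by rewrite bhom_comm // linear_mapN //; apply: actM_lin.
Qed.

Fact bhom_scale_subproof (c : K) (f : bhom) : equivariant b rho actM (fun h => c *: f h).
Proof.
split=> [d u v|y h b_y]; first by rewrite (bhom_lin f) scalerDr !scalerA mulrC.
by rewrite bhom_comm // linear_mapZ //; apply: actM_lin.
Qed.

Definition bhom0 := BHom bhom0_subproof.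
Definition bhom_add f f' := BHom (bhom_add_subproof f f').
Definition bhom_opp f := BHom (bhom_opp_subproof f).
Definition bhom_scale c f := BHom (bhom_scale_subproof c f).

Fact bhom_addA : associative bhom_add.
Proof. by move=> f f' f''; apply: bhom_ext => h /=; rewrite addrA. Qed.
Fact bhom_addC : commutative bhom_add.
Proof. by move=> f f'; apply: bhom_ext => h /=; rewrite addrC. Qed.
Fact bhom_add0 : left_id bhom0 bhom_add.
Proof. by move=> f; apply: bhom_ext => h /=; rewrite add0r. Qed.
Fact bhom_addN : left_inverse bhom0 bhom_opp bhom_add.
Proof. by move=> f; apply: bhom_ext => h /=; rewrite addNr. Qed.

HB.instance Definition _ := GRing.isZmodule.Build bhom bhom_addA bhom_addC bhom_add0 bhom_addN.

Fact bhom_scaleA c d (f : bhom) : bhom_scale c (bhom_scale d f) = bhom_scale (c * d) f.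
Proof. by apply: bhom_ext => h /=; rewrite scalerA. Qed.
Fact bhom_scale1 : left_id 1 bhom_scale.
Proof. by move=> f; apply: bhom_ext => h /=; rewrite scale1r. Qed.
Fact bhom_scaleDr : right_distributive bhom_scale (@GRing.add bhom).
Proof. by move=> c f f'; apply: bhom_ext => h /=; rewrite scalerDr. Qed.
Fact bhom_scaleDl (f : bhom) : {morph bhom_scale^~ f : c d / c + d}.
Proof. by move=> c d; apply: bhom_ext => h /=; rewrite scalerDl. Qed.

HB.instance Definition _ := GRing.Zmodule_isLmodule.Build K bhom
  bhom_scaleA bhom_scale1 bhom_scaleDr bhom_scaleDl.

Lemma bhom0E h : (0 : bhom) h = 0. Proof. by []. Qed.
Lemma bhomDE (f f' : bhom) h : (f + f') h = f h + f' h. Proof. by []. Qed.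
Lemma bhomNE (f : bhom) h : (- f) h = - f h. Proof. by []. Qed.
Lemma bhomZE c (f : bhom) h : (c *: f) h = c *: f h. Proof. by []. Qed.

Lemma bhom_sumE n (F : 'I_n -> bhom) h : (\sum_(i < n) F i) h = \sum_(i < n) F i h.
Proof. exact: (big_morph (fun f : bhom => f h) (fun f f' => bhomDE f f' h) (bhom0E h)). Qed.

Lemma bhom_eval_bilinear : bilinear_map (fun (h : H) (f : bhom) => f h).
Proof. by split=> [f|h]; [exact: bhom_lin | move=> c f f']. Qed.

Lemma actM_comm x y v : actM x (actM y v) = actM (br x y) v + actM y (actM x v).
Proof. by rewrite (HM.2.2 x y v I I) subrK. Qed.

Lemma rho_comm x y v : rho x (rho y v) = rho (br x y) v + rho y (rho x v).
Proof. by rewrite (Hrho.2.2 x y v I I) subrK. Qed.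

(* Chosen so that evaluation h (x) f |-> f h is g-equivariant. *)
Fact bhom_act_subproof x (f : bhom) :
  equivariant b rho actM (fun h => actM x (f h) - f (rho x h)).
Proof.
split=> [c u v|y h b_y].
  rewrite (rho_lin x) !(bhom_lin f) (actM_lin x) scalerBr opprD !addrA.
  by congr (_ - _); rewrite addrAC.
rewrite (bhom_comm f h b_y) actM_comm rho_comm (linear_mapD (bhom_lin f)).
rewrite (bhom_comm f h (b_ideal.2 x y b_y)) (bhom_comm f (rho x h) b_y).
rewrite (linear_mapB (actM_lin y)) opprD addrA.
by rewrite [LHS](ACl ((1*3)*2*4)) /= subrr add0r.
Qed.

Definition bhom_act x f := BHom (bhom_act_subproof x f).

Lemma bhom_actE x (f : bhom) h : bhom_act x f h = actM x (f h) - f (rho x h).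
Proof. by []. Qed.

Lemma bhom_act_module : is_lie_module br bhom_act.
Proof.
split; [|split].
- move=> f c x x'; apply: bhom_ext => h; rewrite bhomDE bhomZE !bhom_actE.
  rewrite HM.1 Hrho.1 (bhom_lin f) scalerBr opprD !addrA.
  by congr (_ - _); rewrite addrAC.
- move=> x c f f'; apply: bhom_ext => h; rewrite bhomDE bhomZE !bhom_actE bhomDE bhomZE.
  rewrite (actM_lin x) scalerBr opprD !addrA.
  by congr (_ - _); rewrite addrAC.
- move=> x y f _ _; apply: bhom_ext => h.
  rewrite bhomDE bhomNE !bhom_actE (linear_mapB (actM_lin x)) (linear_mapB (actM_lin y)).
  rewrite (HM.2.2 x y _ I I) (Hrho.2.2 x y _ I I) (linear_mapB (bhom_lin f)).
  rewrite !opprB ?opprD ?opprK !addrA.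
  set P := actM x _; set Q := actM y (actM x _); set A := actM x _; set B := actM y _.
  set C := f _; set D := f _.
  by rewrite [RHS](ACl (((((1*8)*3)*6)*(2*5))*(4*7))) /= !addNr !addr0.
Qed.

Lemma bhom_act_ideal y f : b y -> bhom_act y f = 0.
Proof. by move=> b_y; apply: bhom_ext => h; rewrite bhom_actE bhom_comm // subrr. Qed.

Definition bhom_values (S : bhom -> Prop) (m : M) :=
  exists n (fs : nat -> bhom) (hs : nat -> H),
    (forall i, (i < n)%N -> S (fs i)) /\ m = \sum_(i < n) fs i (hs i).

Lemma bhom_values_gen (S : bhom -> Prop) f h : S f -> bhom_values S (f h).
Proof.
move=> Sf; exists 1%N, (fun _ => f), (fun _ => h).
by split=> [[]|]; rewrite ?big_ord1.
Qed.

Lemma bhom_values_subspace S : is_subspace (bhom_values S).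
Proof.
split; [|split].
- by exists 0%N, (fun _ => 0), (fun _ => 0); rewrite big_ord0.
- move=> _ _ [n1 [fs1 [hs1 [S1 ->]]]] [n2 [fs2 [hs2 [S2 ->]]]].
  exists (n1 + n2)%N, (catf n1 fs1 fs2), (catf n1 hs1 hs2).
  by split; [exact: catf_forall | rewrite (sumr_catf (fun (f : bhom) h => f h))].
- move=> c _ [n [fs [hs [Sfs ->]]]]; exists n, fs, (fun i => c *: hs i); split=> //.
  by rewrite scaler_sumr; apply: eq_bigr => i _; rewrite (linear_mapZ (bhom_lin _)).
Qed.

Lemma bhom_values_stable S : (forall x f, S f -> S (bhom_act x f)) ->
  forall x m, bhom_values S m -> bhom_values S (actM x m).
Proof.
move=> S_stable x _ [n [fs [hs [Sfs ->]]]].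
exists (n + n)%N, (catf n (fun i => bhom_act x (fs i)) fs), (catf n hs (fun i => rho x (hs i))).
split; first by apply: catf_forall => // i /Sfs /S_stable.
rewrite (sumr_catf (fun (f : bhom) h => f h)) -big_split (linear_map_sum (actM_lin x)).
by apply: eq_bigr => i _; rewrite /= subrK.
Qed.

Section Density.
Hypothesis H_simple : simple_over b rho.
Hypothesis schur : forall phi : H -> H, equivariant b rho rho phi ->
  exists c : K, forall h, phi h = c *: h.

Definition cancellable n (f0 : bhom) (fs : nat -> bhom) (k : H) :=
  exists ks : nat -> H, f0 k + \sum_(i < n) fs i (ks i) = 0.

Lemma cancellable_subspace n f0 fs : is_subspace (cancellable n f0 fs).
Proof.
split; [|split].
- exists (fun _ => 0); rewrite (linear_map0 (bhom_lin _)) add0r.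
  by apply: big1 => i _; rewrite (linear_map0 (bhom_lin _)).
- move=> u v [ku ku_u] [kv kv_v]; exists (fun i => ku i + kv i).
  rewrite (linear_mapD (bhom_lin _)).
  under eq_bigr do rewrite (linear_mapD (bhom_lin _)).
  by rewrite big_split /= addrACA ku_u kv_v addr0.
- move=> c v [kv kv_v]; exists (fun i => c *: kv i).
  rewrite (linear_mapZ (bhom_lin _)).
  under eq_bigr do rewrite (linear_mapZ (bhom_lin _)).
  by rewrite -scaler_sumr -scalerDr kv_v scaler0.
Qed.

Lemma cancellable_stable n f0 fs y k : b y ->
  cancellable n f0 fs k -> cancellable n f0 fs (rho y k).
Proof.
move=> b_y [ks ks_k]; exists (fun i => rho y (ks i)).
rewrite bhom_comm //; under eq_bigr do rewrite bhom_comm //.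
have actMy_lin := actM_lin y.
by rewrite -(linear_map_sum actMy_lin) -(linear_mapD actMy_lin) ks_k (linear_map0 actMy_lin).
Qed.

(* Uniqueness of the cancelling values makes them b-endomorphisms of H, hence scalars by
   Schur. *)
Lemma cancellable_lincomb n (f0 : bhom) (fs : nat -> bhom) :
  (forall hs : nat -> H, \sum_(i < n) fs i (hs i) = 0 -> forall i, (i < n)%N -> hs i = 0) ->
  (forall k, cancellable n f0 fs k) ->
  exists d : nat -> K, f0 + \sum_(i < n) d i *: fs i = 0.
Proof.
move=> fs_sep /choice[Psi Psi_k].
have Psi_uniq k (ks : nat -> H) : f0 k + \sum_(i < n) fs i (ks i) = 0 ->
    forall i, (i < n)%N -> ks i = Psi k i.
  move=> ks_k i lt_in; apply/eqP; rewrite -subr_eq0; apply/eqP.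
  apply: (fs_sep (fun i => ks i - Psi k i)) => //.
  under eq_bigr do rewrite (linear_mapB (bhom_lin _)).
  by rewrite sumrB; apply/eqP; rewrite subr_eq0; apply/eqP/(addrI (f0 k)); rewrite ks_k Psi_k.
have /choice[d Psi_d] : forall i, exists d : K, (i < n)%N -> forall k, Psi k i = d *: k.
  move=> i; case: (ltnP i n) => [lt_in|_]; last by exists 0.
  have [|d Psi_d] := schur (phi := fun k => Psi k i); last by exists d.
  split=> [c u v|y k b_y]; apply/esym.
  - apply: (Psi_uniq _ (fun j => c *: Psi u j + Psi v j)) => //.
    rewrite (linear_mapD (bhom_lin _)) (linear_mapZ (bhom_lin _)).
    under eq_bigr do rewrite (linear_mapD (bhom_lin _)) (linear_mapZ (bhom_lin _)).
    by rewrite big_split /= -scaler_sumr addrACA -scalerDr !Psi_k scaler0 addr0.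
  - apply: (Psi_uniq _ (fun j => rho y (Psi k j))) => //.
    rewrite bhom_comm //; under eq_bigr do rewrite bhom_comm //.
    have actMy_lin := actM_lin y.
    by rewrite -(linear_map_sum actMy_lin) -(linear_mapD actMy_lin) Psi_k (linear_map0 actMy_lin).
exists d; apply: bhom_ext => k; rewrite bhomDE bhom_sumE bhom0E -[RHS](Psi_k k).
congr (_ + _); apply: eq_bigr => i _.
by rewrite bhomZE (Psi_d i (ltn_ord i)) (linear_mapZ (bhom_lin _)).
Qed.

(* Jacobson density for Hom_b(H, M): by induction, if the first value could be cancelled
   (hence, by simplicity, every first value could) then f_0 would lie in the span of the others. *)
Lemma lin_indep_bhom_eval n : forall (fs : nat -> bhom) (hs : nat -> H), lin_indep n fs ->
  \sum_(i < n) fs i (hs i) = 0 -> forall i, (i < n)%N -> hs i = 0.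
Proof.
elim: n => [//|n IH] fs hs fs_indep.
have tail_indep := lin_indep_behead fs_indep.
rewrite (sumr_ord_recl _ (fun i => fs i (hs i))) => hs_rel.
suff hs00 : hs 0%N = 0.
  move: hs_rel; rewrite hs00 (linear_map0 (bhom_lin _)) add0r => hs_rel.
  by case=> [|i] // /(IH _ (fun i => hs i.+1) tail_indep hs_rel i).
apply: contrapT => hs0_neq0.
have fs0_cancel : forall k, cancellable n (fs 0%N) (fun i => fs i.+1) k.
  have [hs0_0|] := H_simple.2 _ (cancellable_subspace n (fs 0%N) (fun i => fs i.+1))
    (fun y k b_y => cancellable_stable b_y).
    by case: hs0_neq0; apply: hs0_0; exists (fun i => hs i.+1).
  by [].
have [d d_rel] := cancellable_lincomb (fun hs => IH _ hs tail_indep) fs0_cancel.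
have := fs_indep (fun i => if i is j.+1 then d j else 1) _ 0%N (ltn0Sn n).
by rewrite (sumr_ord_recl _ (fun i => (if i is j.+1 then d j else 1) *: fs i)) scale1r
  => /(_ d_rel) /eqP; rewrite oner_eq0.
Qed.

Lemma bhom_eval_eq0_bilinear n : forall (fs : nat -> bhom) (hs : nat -> H),
  \sum_(i < n) fs i (hs i) = 0 ->
  forall (X : lmodType K) (Psi : H -> bhom -> X), bilinear_map Psi ->
  \sum_(i < n) Psi (hs i) (fs i) = 0.
Proof.
elim/ltn_ind: n => n IH fs hs hs_rel X Psi Psi_bilin.
have [fs_indep|fs_dep] := EM (lin_indep n fs).
  have hs0 := lin_indep_bhom_eval fs_indep hs_rel.
  by apply: big1 => i _; rewrite (hs0 i (ltn_ord i)) (linear_map0 (Psi_bilin.1 _)).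
have [m [j [hs' [n_eq _ shorten]]]] := lin_dep_shorten hs fs_dep; subst n.
rewrite shorten //; apply: (IH m (ltnSn m) (fun i => fs (bump j i)) hs') => //.
by rewrite -(shorten _ _ bhom_eval_bilinear).
Qed.

Lemma bhom_eval_eq_bilinear n1 (fs1 : nat -> bhom) (hs1 : nat -> H)
    n2 (fs2 : nat -> bhom) (hs2 : nat -> H) :
  \sum_(i < n1) fs1 i (hs1 i) = \sum_(i < n2) fs2 i (hs2 i) ->
  forall (X : lmodType K) (Psi : H -> bhom -> X), bilinear_map Psi ->
  \sum_(i < n1) Psi (hs1 i) (fs1 i) = \sum_(i < n2) Psi (hs2 i) (fs2 i).
Proof.
move=> eq_sums X Psi Psi_bilin; apply/eqP; rewrite -subr_eq0; apply/eqP.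
have sum0 : \sum_(i < n1 + n2) catf n1 fs1 fs2 i (catf n1 hs1 (fun i => - hs2 i) i) = 0.
  rewrite (sumr_catf (fun (f : bhom) h => f h)).
  under [X in _ + X]eq_bigr do rewrite (linear_mapN (bhom_lin _)).
  by rewrite sumrN eq_sums subrr.
have := bhom_eval_eq0_bilinear sum0 Psi_bilin; rewrite (sumr_catf Psi).
by under [X in _ + X]eq_bigr do rewrite (linear_mapN (Psi_bilin.1 _)); rewrite sumrN.
Qed.

Lemma bhom_mem_of_eval (S : bhom -> Prop) n (fs : nat -> bhom) (hs : nat -> H)
    (f0 : bhom) (h0 : H) :
  is_subspace S -> h0 <> 0 -> (forall i, (i < n)%N -> S (fs i)) ->
  f0 h0 = \sum_(i < n) fs i (hs i) -> S f0.
Proof.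
move=> S_subspace h0_neq0; elim/ltn_ind: n fs hs => n IH fs hs Sfs f0_h0.
have [fs_indep|fs_dep] := EM (lin_indep n fs); last first.
  have [m [j [hs' [n_eq le_jm shorten]]]] := lin_dep_shorten hs fs_dep.
  subst n; apply: (IH m (ltnSn m) (fun i => fs (bump j i)) hs').
    by move=> i lt_im; apply: Sfs; rewrite /bump; case: (j <= i)%N; rewrite ?add1n // ltnW.
  by rewrite f0_h0 (shorten _ _ bhom_eval_bilinear).
pose fs_ext i := if i is j.+1 then fs j else f0.
pose hs_ext i := if i is j.+1 then - hs j else h0.
have [ext_indep|ext_dep] := EM (lin_indep n.+1 fs_ext).
  case: h0_neq0; apply: (lin_indep_bhom_eval ext_indep (hs := hs_ext) _ (ltn0Sn n)).
  rewrite (sumr_ord_recl _ (fun i => fs_ext i (hs_ext i))) /= f0_h0 -big_split.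
  by apply: big1 => i _ /=; rewrite (linear_mapN (bhom_lin _)) subrr.
have [d /= ->] := lin_dep_cons (v := fs_ext) fs_indep ext_dep.
exact: (subspace_lincomb d S_subspace Sfs).
Qed.

Section Decomposition.
Hypothesis M_simple : simple_over (fun _ => True) actM.
Variables (j : H -> M) (h0 : H).
Hypotheses (j_equiv : equivariant b rho actM j) (j_h0 : j h0 <> 0).

Lemma bhom_values_total m : bhom_values (fun _ => True) m.
Proof.
have [values0|//] := M_simple.2 _ (bhom_values_subspace (fun _ => True))
  (fun x m _ => bhom_values_stable (fun _ _ _ => I) x (m := m)).
by case: j_h0; apply: values0; apply: (bhom_values_gen (f := BHom j_equiv)).
Qed.

Lemma bhom_act_simple (a : g -> Prop) : vs_direct_sum a b -> simple_over a bhom_act.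
Proof.
move=> [_ g_ab]; split.
  by exists (BHom j_equiv) => /(congr1 (fun f : bhom => f h0)).
move=> S S_subspace S_stable.
have S_gstable x f : S f -> S (bhom_act x f).
  move=> Sf; have [y [z [a_y [b_z ->]]]] := g_ab x.
  have := bhom_act_module.1 f 1 y z; rewrite !scale1r => ->.
  by rewrite (bhom_act_ideal f b_z) addr0; apply: S_stable.
have [values0|values_all] := M_simple.2 _ (bhom_values_subspace S)
  (fun x m _ => bhom_values_stable S_gstable x (m := m)).
  by left=> f Sf; apply: bhom_ext => h; apply: values0; apply: bhom_values_gen.
right=> f; have [n [fs [hs [Sfs f_h0]]]] := values_all (f h0).
apply: (bhom_mem_of_eval S_subspace _ Sfs f_h0) => h00.
by apply: j_h0; rewrite h00 (linear_map0 j_equiv.1).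
Qed.

Lemma bhom_eval_tensor_product : is_tensor_product (fun h (f : bhom) => f h).
Proof.
split=> [|W Phi Phi_bilin]; first exact: bhom_eval_bilinear.
have /choice[rep rep_m] : forall m, exists t : nat * ((nat -> bhom) * (nat -> H)),
    m = \sum_(i < t.1) t.2.1 i (t.2.2 i).
  by move=> m; have [n [fs [hs [_ ->]]]] := bhom_values_total m; exists (n, (fs, hs)).
pose F m := \sum_(i < (rep m).1) Phi ((rep m).2.2 i) ((rep m).2.1 i).
have F_rep n (fs : nat -> bhom) (hs : nat -> H) :
    F (\sum_(i < n) fs i (hs i)) = \sum_(i < n) Phi (hs i) (fs i).
  exact: (bhom_eval_eq_bilinear (esym (rep_m _)) Phi_bilin).
exists F; split; first split.
- move=> c m m'; have [n1 [fs1 [hs1 [_ ->]]]] := bhom_values_total m.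
  have [n2 [fs2 [hs2 [_ ->]]]] := bhom_values_total m'.
  have -> : c *: \sum_(i < n1) fs1 i (hs1 i) + \sum_(i < n2) fs2 i (hs2 i) =
      \sum_(i < n1 + n2) catf n1 fs1 fs2 i (catf n1 (fun i => c *: hs1 i) hs2 i).
    rewrite (sumr_catf (fun (f : bhom) h => f h)) scaler_sumr; congr (_ + _).
    by apply: eq_bigr => i _; rewrite (linear_mapZ (bhom_lin _)).
  rewrite !F_rep (sumr_catf Phi) scaler_sumr; congr (_ + _).
  by apply: eq_bigr => i _; rewrite (linear_mapZ (Phi_bilin.1 _)).
- move=> h f; have := F_rep 1%N (fun _ => f) (fun _ => h); by rewrite !big_ord1.
- move=> F' F'_lin F'_Phi m; have [n [fs [hs [_ ->]]]] := bhom_values_total m.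
  by rewrite F_rep (linear_map_sum F'_lin); apply: eq_bigr => i _; apply: F'_Phi.
Qed.

Lemma bhom_tensor_decomposition (a : g -> Prop) : vs_direct_sum a b ->
  exists (U : lmodType K) (gam : g -> U -> U),
    is_lie_module br gam /\ (forall y u, b y -> gam y u = 0) /\
    simple_over a gam /\
    exists beta : H -> U -> M,
      is_tensor_product beta /\
      forall x h u, actM x (beta h u) = beta (rho x h) u + beta h (gam x u).
Proof.
move=> g_ab; exists bhom, bhom_act.
split; [exact: bhom_act_module | split; [exact: bhom_act_ideal | split]].
  exact: bhom_act_simple.
exists (fun h (f : bhom) => f h); split; first exact: bhom_eval_tensor_product.
by move=> x h f; rewrite bhom_actE addrC subrK.
Qed.

End Decomposition.

End Density.
End BHom.

Theorem theorem2p13 (R : realType)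
    (g : lmodType R[i]) (br : g -> g -> g) (a b : g -> Prop)
    (Hg : is_lie_algebra br) (Hcount : countable_dim g)
    (Ha : lie_subalgebra br a) (Hb : lie_ideal br b) (Hab : vs_direct_sum a b)
    (M : lmodType R[i]) (actM : g -> M -> M)
    (HM : is_lie_module br actM) (HMs : simple_over (fun _ => True) actM)
    (* H, realised as a vector space with an embedding iota into M whose image is
       a b-submodule; rho is the g-module structure H^g extending the b-action *)
    (H : lmodType R[i]) (iota : H -> M) (rho : g -> H -> H)
    (Hiota_lin : linear_map iota) (Hiota_inj : forall h h', iota h = iota h' -> h = h')
    (Hrho : is_lie_module br rho)
    (Hext : forall y h, b y -> iota (rho y h) = actM y (iota h))
    (HHs : simple_over b rho) :
  exists (U : lmodType R[i]) (gam : g -> U -> U),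
    (* U^g : the a-module U with b acting trivially *)
    is_lie_module br gam /\ (forall y u, b y -> gam y u = 0) /\
    simple_over a gam /\
    (* M is isomorphic to H^g (x) U^g as g-modules *)
    exists beta : H -> U -> M,
      is_tensor_product beta /\
      forall x h u, actM x (beta h u) = beta (rho x h) u + beta h (gam x u).
Proof.
have schur := dixmier_schur (@complex_not_countable R) Hrho.2.1 HHs
  (simple_countable_span Hrho.1 Hrho.2.1 HHs Hcount).
have [h0 h0_neq0] := HHs.1.
apply: (bhom_tensor_decomposition Hb HM Hrho HHs schur HMs (conj Hiota_lin Hext) (h0 := h0) _ Hab).
by move=> iota_h0; apply/h0_neq0/Hiota_inj; rewrite iota_h0 (linear_map0 Hiota_lin).
Qed.
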